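(* Let $X=\{x_1<\dots<x_r\} \subseteq Z=\{z_1<\dots<z_m\}$ be two sets of positive integers. For an integer $y$, let \[ \nu(y) = \#\{z\in Z\mid z\geq y\} + \#\{x\in X\mid x\leq y\}, \] and for a set $Y$, $\nu(Y) = \sum_{y\in Y} \nu(y)$. For $r\leq s\leq m$, let \[ \Sigma_s(X,Z) = \sum_{X\subseteq Y\subseteq Z,\ |Y|=s} q^{\nu(Y)}. \] Then \[ \Sigma_s(X,Z) = q^{\nu(X) + (r+1)(s-r)+\binom{s-r}{2}} \left[\begin{matrix} m-r\\ s-r\end{matrix}\right]_q . \]
   Context: $\left[\begin{matrix} a\\ b\end{matrix}\right]_q$ denotes the Gaussian $q$-binomial coefficient. *)

From HB Require Import structures.
From mathcomp Require Import all_boot all_order all_algebra.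
From mathcomp Require Import finmap.
Set Implicit Arguments. Unset Strict Implicit. Unset Printing Implicit Defensive.
Import GRing.Theory.
Local Open Scope ring_scope.
Local Open Scope fset_scope.

Fixpoint qbinom (R : comRingType) (q : R) (n k : nat) : R :=
  match n, k with
  | O, O => 1
  | O, S _ => 0
  | S _, O => 1
  | S n', S k' => qbinom q n' k' + q ^+ k * qbinom q n' k
  end.

Definition nu (X Z : {fset nat}) (y : nat) : nat :=
  (#|` [fset z in Z | (y <= z)%N]| + #|` [fset x in X | (x <= y)%N]|)%N.

Definition nuS (X Z Y : {fset nat}) : nat := (\sum_(y <- Y) nu X Z y)%N.

Definition Sigma (R : comRingType) (q : R) (X Z : {fset nat}) (s : nat) : R :=
  \sum_(Y <- fpowerset Z | (X `<=` Y) && (#|` Y| == s)) q ^+ nuS X Z Y.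

(* Write Y = X + W with W a subset of D = Z \ X.  Then nu(Y) = nu(X) + nu(W),
   and for w in D, nu(w) = |Z| - #{d in D | d < w}: the elements of Z below w
   that lie in X are given back by the second term of nu(w).  For an n-set D
   and c >= n, the sum over the k-subsets W of D of
   q^(sum_{w in W} (c - #{d in D | d < w})) obeys the q-Pascal recursion when
   the largest element of D is removed, hence equals
   q^((c-n+1)k + C(k,2)) [n, k]_q; take c = |Z|. *)

From HB Require Import structures.
From mathcomp Require Import all_boot all_order all_algebra.
From mathcomp Require Import finmap.
From mathcomp Require Import zify.
Set Implicit Arguments. Unset Strict Implicit.
Import GRing.Theory.
Local Open Scope ring_scope.
Local Open Scope fset_scope.

Section BigFpowerset.
Variables (R : Type) (idx : R) (op : Monoid.com_law idx) (I : choiceType).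

Lemma big_fsetU_disjoint (A B : {fset I}) (P : pred I) (F : I -> R) :
  [disjoint A & B] ->
  \big[op/idx]_(i <- A `|` B | P i) F i =
  op (\big[op/idx]_(i <- A | P i) F i) (\big[op/idx]_(i <- B | P i) F i).
Proof.
move=> /fdisjointP dAB; rewrite (big_fsetIDcond _ (mem A)).
congr (op _ _); apply: eq_fbigl_cond => i; rewrite !inE /=.
  by case: (boolP (i \in A)); rewrite ?andbF.
by case: (boolP (i \in A)) => [/dAB/negbTE ->|]; rewrite ?andbT.
Qed.

Lemma big_fpowerset_fsupset (X Z : {fset I}) (F : {fset I} -> R) :
  X `<=` Z ->
  \big[op/idx]_(Y <- fpowerset Z | X `<=` Y) F Y =
  \big[op/idx]_(W <- fpowerset (Z `\` X)) F (X `|` W).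
Proof.
move=> XZ; have UDK W : [disjoint W & X] -> (X `|` W) `\` X = W.
  by move=> /fsetDidPl dWX; rewrite fsetDUl fsetDv fset0U.
rewrite big_fset_condE.
have -> : [fset Y in fpowerset Z | X `<=` Y] =
          [fset X `|` W | W in fpowerset (Z `\` X)].
  apply/fsetP => Y; rewrite !inE /= fpowersetE; apply/andP/imfsetP.
    move=> [YZ XY]; exists (Y `\` X); first by rewrite /= fpowersetE fsetSD.
    by rewrite fsetUDl fsetDv fsetD0; apply/esym/fsetUidPr.
  move=> [W]; rewrite /= fpowersetCE => /andP[WZ _] ->.
  by rewrite fsubUset XZ WZ fsubsetUl.
rewrite big_imfset //= => W1 W2; rewrite !fpowersetCE.
by move=> /andP[_ dW1] /andP[_ dW2] eqW; rewrite -(UDK _ dW1) eqW UDK.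
Qed.

Lemma big_fpowerset_fsetD1 (a : I) (D : {fset I}) (F : {fset I} -> R) :
  a \in D ->
  \big[op/idx]_(W <- fpowerset D) F W =
  op (\big[op/idx]_(W <- fpowerset (D `\ a)) F W)
     (\big[op/idx]_(W <- fpowerset (D `\ a)) F (a |` W)).
Proof.
move=> aD; rewrite (big_fsetID _ (fun W : {fset I} => a \notin W)).
congr (op _ _).
  by apply: eq_fbigl => W; rewrite !inE /= !fpowersetE fsubsetD1.
rewrite -big_fset_condE -big_fpowerset_fsupset ?fsub1set //.
by apply: eq_bigl => W; rewrite fsub1set negbK.
Qed.

End BigFpowerset.

Lemma seq_nat_max (s : seq nat) x :
  x \in s -> exists2 a, a \in s & {in s, forall d, d <= a}%N.
Proof.
elim: s x => // y s IH x _; case: s IH => [|z s] IH.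
  by exists y; rewrite ?mem_head // => d; rewrite inE => /eqP ->.
have [a aS aM] := IH z (mem_head _ _).
have [ya | ay] := leqP y a.
  exists a; first by rewrite inE aS orbT.
  by move=> d; rewrite inE => /orP[/eqP -> | /aM].
exists y; first exact: mem_head.
by move=> d; rewrite inE => /orP[/eqP -> // | /aM da]; exact: leq_trans da (ltnW ay).
Qed.

Definition fset_rank (D : {fset nat}) (w : nat) : nat :=
  #|` [fset d in D | (d < w)%N]|.

Lemma fset_rank_fsetD1_max (D : {fset nat}) (a w : nat) :
  {in D, forall d, d <= a}%N -> w \in D `\ a ->
  fset_rank D w = fset_rank (D `\ a) w.
Proof.
move=> aM; rewrite !inE => /andP[wa wD]; congr #|` _|; apply/fsetP => d.
rewrite !inE; case: (d =P a) => [-> | //]; have := aM w wD; lia.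
Qed.

Lemma fset_rank_max (D : {fset nat}) (a : nat) :
  a \in D -> {in D, forall d, d <= a}%N -> fset_rank D a = #|` D `\ a|.
Proof.
move=> aD aM; congr #|` _|; apply/fsetP => d; rewrite !inE.
by case: (boolP (d \in D)) => [/aM|]; rewrite ?andbF ?andbT //; lia.
Qed.

Lemma nu_fsetD (X Z : {fset nat}) (y : nat) : X `<=` Z -> y \in Z `\` X ->
  nu X Z y = (#|` Z| - fset_rank (Z `\` X) y)%N.
Proof.
move=> XZ; rewrite inE => /andP[yX yZ]; rewrite /nu /fset_rank.
have splitZ : #|` Z| =
    (#|` [fset z in Z | (y <= z)%N]| + #|` [fset z in Z | (z < y)%N]|)%N.
  rewrite !card_fset_sum1 (big_fsetID _ (fun z => y <= z)%N); congr (_ + _)%N.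
  by apply: eq_fbigl => z; rewrite !inE ltnNge.
have splitZlt : #|` [fset z in Z | (z < y)%N]| =
    (#|` [fset x in X | (x < y)%N]| + #|` [fset d in Z `\` X | (d < y)%N]|)%N.
  rewrite !card_fset_sum1 -!big_fset_condE -big_fsetU_disjoint.
    by rewrite fsetUDl fsetDv fsetD0 (fsetUidPr _ _ XZ).
  by apply/fdisjointP => x xX; rewrite inE xX.
have -> : [fset x in X | (x <= y)%N] = [fset x in X | (x < y)%N].
  apply/fsetP => x; rewrite !inE; case: (boolP (x \in X)) => //= xX.
  by rewrite ltn_neqAle; case: (x =P y) => // xy; rewrite -xy xX in yX.
lia.
Qed.

Section QBinomialSum.
Variables (R : comNzRingType) (q : R).

Lemma qbinom0 n : qbinom q n 0 = 1.
Proof. by case: n. Qed.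

Lemma sum_fpowerset_rank (c k : nat) (D : {fset nat}) : (#|` D| <= c)%N ->
  \sum_(W <- fpowerset D | #|` W| == k) q ^+ (\sum_(w <- W) (c - fset_rank D w))%N
  = q ^+ ((c - #|` D|).+1 * k + 'C(k, 2))%N * qbinom q #|` D| k.
Proof.
move Dn: #|` D| => n; elim: n D k Dn => [|n IH] D k Dn cD.
  rewrite (cardfs0_eq Dn) fpowerset0 big_mkcond big_seq_fset1 cardfs0.
  by case: k => [|k] /=; rewrite ?big_seq_fset0 ?muln0 ?bin0n ?mulr0 ?mulr1.
have /fset0Pn [x xD] : D != fset0 by apply: contra_eqN Dn => /eqP ->; rewrite cardfs0.
(* Split on whether the largest element [a] of [D] lies in [W]: the rank of [a]
   is [n], so it contributes [q ^+ (c - n)], as in the q-Pascal recursion. *)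
have [a aD aM] := seq_nat_max xD.
set D' := D `\ a; have D'n : #|` D'| = n by move: Dn; rewrite (cardfsD1 a) aD => -[].
have sum_D' j : \sum_(W <- fpowerset D' | #|` W| == j)
    q ^+ (\sum_(w <- W) (c - fset_rank D w))%N
  = q ^+ ((c - n).+1 * j + 'C(j, 2))%N * qbinom q n j.
  rewrite -(IH D') //; last by lia.
  apply: eq_fbigr => W; rewrite fpowersetE => WD' _; congr (_ ^+ _).
  by apply: eq_fbigr => w wW _; rewrite (fset_rank_fsetD1_max aM) ?(fsubsetP WD').
have sum_aD' : \sum_(W <- fpowerset D' | #|` a |` W| == k)
    q ^+ (\sum_(w <- a |` W) (c - fset_rank D w))%N
  = q ^+ (c - n) * \sum_(W <- fpowerset D' | #|` W|.+1 == k)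
    q ^+ (\sum_(w <- W) (c - fset_rank D w))%N.
  rewrite mulr_sumr [LHS]big_seq_cond [RHS]big_seq_cond.
  have aW W : W `<=` D' -> a \notin W by rewrite fsubsetD1 => /andP[].
  apply: eq_big => [W | W]; rewrite fpowersetE.
    by case WD': (W `<=` D') => //=; rewrite cardfsU1 aW.
  by move=> /andP[/aW aW' _]; rewrite big_fsetU1 //= fset_rank_max // -/D' D'n exprD.
rewrite big_mkcond (big_fpowerset_fsetD1 _ _ aD) -!big_mkcond /= sum_D' {}sum_aD'.
case: k => [|k].
  by rewrite big_pred0 // mulr0 addr0 !muln0 qbinom0.
under eq_bigl do rewrite eqSS.
rewrite sum_D' /= mulrDr addrC.
by congr (_ + _)%R; rewrite !mulrA -!exprD; congr (_ ^+ _ * _)%R; rewrite binS bin1; nia.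
Qed.

Lemma Sigma_fsetD (X Z : {fset nat}) (s : nat) : X `<=` Z -> (#|` X| <= s)%N ->
  Sigma q X Z s = q ^+ nuS X Z X *
    \sum_(W <- fpowerset (Z `\` X) | #|` W| == (s - #|` X|)%N)
      q ^+ (\sum_(w <- W) nu X Z w)%N.
Proof.
move=> XZ Xs; rewrite /Sigma big_mkcondr big_fpowerset_fsupset // mulr_sumr [RHS]big_mkcond.
apply: eq_fbigr => W; rewrite fpowersetCE fdisjoint_sym => /andP[_ dXW] _.
have cardXW : #|` X `|` W| = (#|` X| + #|` W|)%N by apply/eqP; rewrite (leq_card_fsetU X W).2.
rewrite /nuS big_fsetU_disjoint //= exprD cardXW.
by have -> : ((#|` X| + #|` W| == s) = (#|` W| == s - #|` X|))%N by apply/eqP/eqP; lia.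
Qed.

End QBinomialSum.

Theorem mainTheorem15 (R : comRingType) (q : R) (X Z : {fset nat}) (s : nat) :
  (forall z, z \in Z -> (0 < z)%N) ->
  X `<=` Z ->
  (#|` X| <= s)%N -> (s <= #|` Z|)%N ->
  Sigma q X Z s =
  q ^+ (nuS X Z X + (#|` X|).+1 * (s - #|` X|) + 'C(s - #|` X|, 2))%N
    * qbinom q (#|` Z| - #|` X|) (s - #|` X|).
Proof.
move=> _ XZ Xs sZ; rewrite Sigma_fsetD //.
have cardD : #|` Z `\` X| = (#|` Z| - #|` X|)%N by rewrite cardfsDS.
transitivity (q ^+ nuS X Z X *
  \sum_(W <- fpowerset (Z `\` X) | #|` W| == (s - #|` X|)%N)
    q ^+ (\sum_(w <- W) (#|` Z| - fset_rank (Z `\` X) w))%N).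
  congr (_ * _); apply: eq_fbigr => W; rewrite fpowersetE => WD _.
  by congr (_ ^+ _); apply: eq_fbigr => w wW _; rewrite nu_fsetD ?(fsubsetP WD).
rewrite sum_fpowerset_rank cardD ?leq_subr // mulrA -exprD.
by rewrite subKn ?addnA ?fsubset_leq_card.
Qed.
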